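(* Let $M'=\langle A,\Sigma\rangle$ be a countable structure and let $\mathcal{F}$ be the set of all (everywhere defined) functions $f\colon\mathbb{N}\to A$. Let $\varphi\colon\mathcal{F}\to\mathcal{F}$ be a partial mapping with countable domain which almost preserves every relation definable in $\langle A,\Sigma\rangle$. Then for every $a\in\mathcal{F}$ with $a\notin \mathrm{Dom}(\varphi)$ there exists $b\in\mathcal{F}$ such that the mapping $\varphi\cup\{\langle a,b\rangle\}$ (extending $\varphi$ by $a\mapsto b$) almost preserves every relation definable in $\langle A,\Sigma\rangle$.
   Context: The signature $\Sigma$ contains the equality symbol $=$. A relation on $A$ is definable in $\langle A,\Sigma\rangle$ if it is defined in $M'$ by a first-order formula in the signature $\Sigma$ (without parameters). For an $n$-ary relation $P$ on $A$ and a partial mapping $\psi\colon\mathcal{F}\to\mathcal{F}$, we say $\psi$ almost preserves $P$ if for all $f_1,\dots,f_n\in\mathrm{Dom}(\psi)$ the set $\{i\in\mathbb{N} : P(f_1(i),\dots,f_n(i))\not\leftrightarrow P(\psi(f_1)(i),\dots,\psi(f_n)(i))\}$ is finite. *)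

From Stdlib Require Import ClassicalEpsilon.
From mathcomp Require Import all_boot.

Set Implicit Arguments.
Unset Strict Implicit.
Unset Printing Implicit Defensive.

Record signature := Signature {
  fsym : Type;                 (* function symbols (constants = arity 0) *)
  rsym : Type;
  farity : fsym -> nat;
  rarity : rsym -> nat }.

Record structure (S : signature) := Structure {
  carrier :> Type;
  fun_interp : forall f : fsym S, ('I_(farity f) -> carrier) -> carrier;
  rel_interp : forall r : rsym S, ('I_(rarity r) -> carrier) -> Prop }.

Definition countable_type (T : Type) : Prop :=
  exists g : T -> nat, forall x y, g x = g y -> x = y.

Definition countable_structure (S : signature) (M : structure S) : Prop :=
  countable_type (fsym S) /\ countable_type (rsym S) /\ countable_type M.

Inductive term (S : signature) : Type :=
  | Var : nat -> term S
  | App : forall f : fsym S, ('I_(farity f) -> term S) -> term S.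

Inductive formula (S : signature) : Type :=
  | FEq : term S -> term S -> formula S
  | FRel : forall r : rsym S, ('I_(rarity r) -> term S) -> formula S
  | FNeg : formula S -> formula S
  | FAnd : formula S -> formula S -> formula S
  | FExists : nat -> formula S -> formula S.

Fixpoint eval_term (S : signature) (M : structure S) (v : nat -> M) (t : term S)
  : M :=
  match t with
  | Var n => v n
  | App f ts => @fun_interp S M f (fun i => eval_term v (ts i))
  end.

Definition update (T : Type) (v : nat -> T) (n : nat) (x : T) : nat -> T :=
  fun k => if k == n then x else v k.

Fixpoint sat (S : signature) (M : structure S) (v : nat -> M) (phi : formula S)
  : Prop :=
  match phi with
  | FEq t1 t2 => eval_term v t1 = eval_term v t2
  | FRel r ts => @rel_interp S M r (fun i => eval_term v (ts i))
  | FNeg p => ~ sat v p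
  | FAnd p q => sat v p /\ sat v q
  | FExists n p => exists x : M, sat (update v n x) p
  end.

(** An n-ary relation P on M is definable (without parameters) if some formula
    whose truth depends only on variables x_0,...,x_(n-1) defines it. *)
Definition definable (S : signature) (M : structure S) (n : nat)
  (P : ('I_n -> M) -> Prop) : Prop :=
  exists phi : formula S, forall (a : 'I_n -> M) (v : nat -> M),
    (forall i : 'I_n, v i = a i) -> (P a <-> sat v phi).

(** A partial map on F = (nat -> A), given by a domain and a total function
    whose values outside the domain are irrelevant. *)
Definition almost_preserves (A : Type) (Dom : (nat -> A) -> Prop)
  (psi : (nat -> A) -> (nat -> A)) (n : nat) (P : ('I_n -> A) -> Prop) : Prop :=
  forall fs : 'I_n -> (nat -> A), (forall j, Dom (fs j)) ->
    exists N : nat, forall i : nat, N <= i ->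
      (P (fun j => fs j i) <-> P (fun j => psi (fs j) i)).

Definition almost_preserves_definable (S : signature) (M : structure S)
  (Dom : (nat -> M) -> Prop) (psi : (nat -> M) -> (nat -> M)) : Prop :=
  forall (n : nat) (P : ('I_n -> M) -> Prop),
    definable P -> almost_preserves Dom psi P.

Definition ext_dom (A : Type) (Dom : (nat -> A) -> Prop) (a : nat -> A)
  : (nat -> A) -> Prop := fun f => Dom f \/ f = a.

Definition ext_map (A : Type) (psi : (nat -> A) -> (nat -> A)) (a b : nat -> A)
  : (nat -> A) -> (nat -> A) :=
  fun f => if excluded_middle_informative (f = a) then b else psi f.

(** Enumerate Dom(phi) as d_0, d_1, ... and all formulas as e_0, e_1, ...
    For fixed k, the finitely many existential formulas
    "exists x, x has a prescribed e_0..e_k-type over d_0, d_1, ..." are almost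
    preserved by phi, so for large i the e_0..e_k-type of a(i) over the d_m(i)
    is realized by some element over the phi(d_m)(i).  Choosing b(i) to realize
    the largest such k <= i, every formula e_k is eventually satisfied by
    (b, phi(d_0), ...) at i exactly when it is satisfied by (a, d_0, ...).
    A definable relation evaluated on a and members of Dom(phi) is the
    satisfaction of a renamed formula in these two environments. *)

From Pilot Require Import Defs.
From Stdlib Require Import ClassicalEpsilon FunctionalExtensionality.
From mathcomp Require Import all_boot.

Set Implicit Arguments.
Unset Strict Implicit.
Unset Printing Implicit Defensive.

Section Syntax.
Variable S : signature.

(* Strict upper bounds on the indices of the variables occurring in a term
   or formula (bound variables are not excluded). *)
Fixpoint term_bound (t : term S) : nat :=
  match t with
  | Var n => n.+1
  | App f ts => \max_(i < farity f) term_bound (ts i)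
  end.

Fixpoint formula_bound (p : formula S) : nat :=
  match p with
  | FEq t1 t2 => maxn (term_bound t1) (term_bound t2)
  | FRel r ts => \max_(i < rarity r) term_bound (ts i)
  | FNeg q => formula_bound q
  | FAnd q1 q2 => maxn (formula_bound q1) (formula_bound q2)
  | FExists _ q => formula_bound q
  end.

Fixpoint rename_term (s : nat -> nat) (t : term S) : term S :=
  match t with
  | Var n => Var S (s n)
  | App f ts => App (fun i => rename_term s (ts i))
  end.

(* Under a binder the bound variable goes to a fresh index z, larger than the
   image of every variable of the body, so no capture can occur. *)
Fixpoint rename_formula (s : nat -> nat) (p : formula S) : formula S :=
  match p with
  | FEq t1 t2 => FEq (rename_term s t1) (rename_term s t2)
  | FRel r ts => FRel (fun i => rename_term s (ts i))
  | FNeg q => FNeg (rename_formula s q)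
  | FAnd q1 q2 => FAnd (rename_formula s q1) (rename_formula s q2)
  | FExists n q => let z := (\max_(m < formula_bound q) s m).+1 in
      FExists z (rename_formula (fun k => if k == n then z else s k) q)
  end.

Variable M : structure S.

Lemma eval_term_agree (v w : nat -> M) (t : term S) :
  (forall m, m < term_bound t -> v m = w m) -> eval_term v t = eval_term w t.
Proof.
elim: t => [n|f ts IH] /= vw; first exact: vw.
congr fun_interp; apply: functional_extensionality => i; apply: IH => m lt_m.
by apply: vw; apply: leq_trans lt_m _; rewrite (bigD1 i) //= leq_maxl.
Qed.

Lemma sat_agree (p : formula S) (v w : nat -> M) :
  (forall m, m < formula_bound p -> v m = w m) -> (sat v p <-> sat w p).
Proof.
elim: p v w => [t1 t2|r ts|q IH|q1 IH1 q2 IH2|n q IH] v w /= vw.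
- rewrite (eval_term_agree (t := t1) (w := w)) ?(eval_term_agree (t := t2) (w := w)) //.
  + by move=> m lt_m; apply: vw; rewrite leq_max lt_m orbT.
  + by move=> m lt_m; apply: vw; rewrite leq_max lt_m.
- suff -> : (fun i => eval_term v (ts i)) = (fun i => eval_term w (ts i)) by [].
  apply: functional_extensionality => i; apply: eval_term_agree => m lt_m.
  by apply: vw; apply: leq_trans lt_m _; rewrite (bigD1 i) //= leq_maxl.
- by rewrite (IH v w vw).
- rewrite (IH1 v w) ?(IH2 v w) //.
  + by move=> m lt_m; apply: vw; rewrite leq_max lt_m orbT.
  + by move=> m lt_m; apply: vw; rewrite leq_max lt_m.
- have upd_agree x m : m < formula_bound q -> update v n x m = update w n x m.
    by rewrite /update; case: eqP => // _; apply: vw.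
  by split=> -[x Hx]; exists x; apply/(IH _ _ (upd_agree x)).
Qed.

Lemma eval_rename_term (v : nat -> M) (s : nat -> nat) (t : term S) :
  eval_term v (rename_term s t) = eval_term (fun k => v (s k)) t.
Proof.
elim: t => [n|f ts IH] //=.
by congr fun_interp; apply: functional_extensionality => i; apply: IH.
Qed.

Lemma sat_rename (p : formula S) (s : nat -> nat) (v : nat -> M) :
  sat v (rename_formula s p) <-> sat (fun k => v (s k)) p.
Proof.
elim: p s v => [t1 t2|r ts|q IH|q1 IH1 q2 IH2|n q IH] s v /=.
- by rewrite !eval_rename_term.
- suff -> : (fun i => eval_term v (rename_term s (ts i))) =
            (fun i => eval_term (fun k => v (s k)) (ts i)) by [].
  by apply: functional_extensionality => i; rewrite eval_rename_term.
- by rewrite IH.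
- by rewrite IH1 IH2.
- set z := (\max_(m < formula_bound q) s m).+1.
  have fresh x : sat (update v z x) (rename_formula (fun k => if k == n then z else s k) q)
              <-> sat (update (fun k => v (s k)) n x) q.
    rewrite IH; apply: sat_agree => m lt_m /=; rewrite /update.
    case: (m =P n) => _; first by rewrite eqxx.
    case: eqP => // zE; suff : s m < z by rewrite zE ltnn.
    by rewrite ltnS (bigD1 (Ordinal lt_m)) //= leq_maxl.
  by split=> -[x Hx]; exists x; apply/fresh.
Qed.

End Syntax.

Lemma countable_enum (T : Type) : countable_type T -> T ->
  exists e : nat -> T, forall x, exists k, e k = x.
Proof.
move=> [g g_inj] x0.
exists (fun k => match excluded_middle_informative (exists x, g x = k) with
                 | left ex => proj1_sig (constructive_indefinite_description _ ex)
                 | right _ => x0 end).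
move=> x; exists (g x); case: excluded_middle_informative => [ex|[]]; last by exists x.
exact/g_inj/(proj2_sig (constructive_indefinite_description _ ex)).
Qed.

Section FormulaCountable.
Variables (S : signature) (gf : Defs.fsym S -> nat) (gr : rsym S -> nat).
Hypotheses (gf_inj : injective gf) (gr_inj : injective gr).

Fixpoint encode_term (t : term S) : GenTree.tree nat :=
  match t with
  | Var n => GenTree.Node 0 [:: GenTree.Leaf n]
  | App f ts => GenTree.Node 1
      (GenTree.Leaf (gf f) :: [seq encode_term (ts i) | i <- enum 'I_(farity f)])
  end.

Lemma encode_term_inj : injective encode_term.
Proof.
elim=> [n|f ts IH] [m|f' ts'] //=; first by case=> ->.
case=> /gf_inj ff'; subst f' => /eq_in_map tsE.
congr App; apply: functional_extensionality => i.
by apply/IH/tsE; rewrite mem_enum.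
Qed.

Fixpoint encode_formula (p : formula S) : GenTree.tree nat :=
  match p with
  | FEq t1 t2 => GenTree.Node 2 [:: encode_term t1; encode_term t2]
  | FRel r ts => GenTree.Node 3
      (GenTree.Leaf (gr r) :: [seq encode_term (ts i) | i <- enum 'I_(rarity r)])
  | FNeg q => GenTree.Node 4 [:: encode_formula q]
  | FAnd q1 q2 => GenTree.Node 5 [:: encode_formula q1; encode_formula q2]
  | FExists n q => GenTree.Node 6 [:: GenTree.Leaf n; encode_formula q]
  end.

Lemma encode_formula_inj : injective encode_formula.
Proof.
elim=> [t1 t2|r ts|q IH|q1 IH1 q2 IH2|n q IH] [u1 u2|r' ts'|q'|q1' q2'|n' q'] //=.
- by case=> /encode_term_inj -> /encode_term_inj ->.
- case=> /gr_inj rr'; subst r' => /eq_in_map tsE.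
  congr FRel; apply: functional_extensionality => i.
  by apply/encode_term_inj/tsE; rewrite mem_enum.
- by case=> /IH ->.
- by case=> /IH1 -> /IH2 ->.
- by case=> -> /IH ->.
Qed.

Lemma countable_formula : countable_type (formula S).
Proof.
exists (fun p => pickle (encode_formula p)) => p q.
by move/(pcan_inj pickleK)/encode_formula_inj.
Qed.

End FormulaCountable.

Definition eventually (Q : nat -> Prop) : Prop := exists N, forall i, N <= i -> Q i.

Lemma eventually_forall_fin (I : finType) (Q : I -> nat -> Prop) :
  (forall p, eventually (Q p)) -> eventually (fun i => forall p, Q p i).
Proof.
move=> /choice [N HN]; exists (\max_p N p) => i le_i p.
by apply: HN; apply: leq_trans le_i; rewrite (bigD1 p) //= leq_maxl.
Qed.

Lemma exists_uniform_realizer (T : Type) (R : nat -> T -> Prop) (x0 : T) :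
  (forall k n x, k <= n -> R n x -> R k x) ->
  forall j, exists x, forall k, k <= j -> (exists y, R k y) -> R k x.
Proof.
move=> R_le; elim=> [|j [x Rx]].
  have [[y Ry]|none] := classic (exists y, R 0 y).
    by exists y => k; rewrite leqn0 => /eqP ->.
  by exists x0 => k; rewrite leqn0 => /eqP -> /none.
have [[y Ry]|none] := classic (exists y, R j.+1 y).
  by exists y => k le_k _; apply: R_le Ry.
exists x => k; rewrite leq_eqVlt ltnS => /orP [/eqP -> /none //|]; exact: Rx.
Qed.

Definition scons (T : Type) (x : T) (u : nat -> T) (m : nat) : T :=
  if m is m'.+1 then u m' else x.

Section Extension.
Variables (S : signature) (M : structure S) (Dom : (nat -> M) -> Prop)
  (phi : (nat -> M) -> (nat -> M)).
Hypothesis phi_pres : almost_preserves_definable Dom phi.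

Lemma sat_transfer (t : nat -> nat -> M) (chi : formula S) :
  (forall m, Dom (t m)) ->
  eventually (fun i => sat (fun m => t m i) chi <-> sat (fun m => phi (t m) i) chi).
Proof.
move=> Dom_t; pose n := formula_bound chi.
pose ext (g : 'I_n -> M) (m : nat) : M := odflt (t 0 0) (omap g (insub m)).
have extE g m (lt_m : m < n) : ext g m = g (Ordinal lt_m) by rewrite /ext insubT.
have ext_sat (u : nat -> M) : sat u chi <-> sat (ext (fun j : 'I_n => u j)) chi.
  by apply: sat_agree => m lt_m; rewrite (extE _ _ lt_m).
have chi_def : definable (fun g : 'I_n -> M => sat (ext g) chi).
  exists chi => g v vg; apply: sat_agree => m lt_m.
  by rewrite (extE _ _ lt_m) -(vg (Ordinal lt_m)).
have [N HN] := phi_pres chi_def (fun j : 'I_n => Dom_t j).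
exists N => i le_i.
by rewrite (ext_sat (fun m => t m i)) (ext_sat (fun m => phi (t m) i)); apply: HN.
Qed.

Variables (e : nat -> formula S) (d : nat -> nat -> M) (a : nat -> M).
Hypothesis Dom_d : forall m, Dom (d m).

(* Variable 0 stands for a(i), resp. x, and variable m+1 for d_m(i), resp.
   phi(d_m)(i): x realizes the e_0..e_k-type of a(i) over the d_m(i). *)
Definition realizes (i k : nat) (x : M) : Prop := forall m, m <= k ->
  (sat (scons x (fun m => phi (d m) i)) (e m) <-> sat (scons (a i) (fun m => d m i)) (e m)).

Lemma realizes_le i k n x : k <= n -> realizes i n x -> realizes i k x.
Proof. by move=> le_kn Rx m le_m; apply: Rx; apply: leq_trans le_kn. Qed.

Definition literal (p : nat -> bool) (m : nat) : formula S :=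
  if p m then e m else FNeg (e m).

Fixpoint type_formula (p : nat -> bool) (k : nat) : formula S :=
  match k with
  | 0 => literal p 0
  | k'.+1 => FAnd (type_formula p k') (literal p k'.+1)
  end.

Lemma sat_literal (v : nat -> M) p m : sat v (literal p m) <-> (sat v (e m) <-> p m).
Proof.
rewrite /literal; case: (p m) => /=.
- by split=> [Hs | [_ H]]; [split | apply: H].
- by split=> [ns | [H _] Hs]; [split=> // /ns | have := H Hs].
Qed.

Lemma sat_type_formula (v : nat -> M) p k :
  sat v (type_formula p k) <-> forall m, m <= k -> (sat v (e m) <-> p m).
Proof.
elim: k => [|k IH] /=.
  by rewrite sat_literal; split=> [H m|H]; [rewrite leqn0 => /eqP -> | exact: H].
rewrite IH sat_literal; split=> [[H1 H2] m|H].
  by rewrite leq_eqVlt ltnS => /orP [/eqP ->|]; [exact: H2 | exact: H1].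
by split=> [m le_m|]; apply: H => //; apply: leqW.
Qed.

Lemma realizable_eventually k : eventually (fun i => exists x, realizes i k x).
Proof.
pose exists_type (p : {ffun 'I_k.+1 -> bool}) :=
  FExists 0 (type_formula (fun m => p (inord m)) k).
have [N HN] := eventually_forall_fin (fun p =>
  sat_transfer (t := fun m => d m.-1) (exists_type p) (fun m => Dom_d m.-1)).
exists N => i le_i.
pose p := [ffun j : 'I_k.+1 =>
  if excluded_middle_informative (sat (scons (a i) (fun m => d m i)) (e j)) then true else false].
have pE m : m <= k -> (sat (scons (a i) (fun m => d m i)) (e m) <-> p (inord m)).
  by move=> le_m; rewrite ffunE inordK //; case: excluded_middle_informative.
have upd (u : nat -> M) x : update (fun m => u m.-1) 0 x = scons x u.
  by apply: functional_extensionality => -[|m].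
have [x] : sat (fun m => phi (d m.-1) i) (exists_type p).
  apply/HN => //; exists (a i).
  by rewrite (upd (fun m => d m i)); apply/sat_type_formula.
rewrite (upd (fun m => phi (d m) i)) => /sat_type_formula Hx.
by exists x => m le_m; rewrite pE //; apply: Hx.
Qed.

(* b(i) realizes every realizable level k <= i at once. *)
Definition ext_value (i : nat) : M := proj1_sig (constructive_indefinite_description _
  (exists_uniform_realizer (a i) (@realizes_le i) i)).

Lemma ext_value_realizes i k :
  k <= i -> (exists x, realizes i k x) -> realizes i k (ext_value i).
Proof.
exact: (proj2_sig (constructive_indefinite_description _
  (exists_uniform_realizer (a i) (@realizes_le i) i))).
Qed.

Lemma scons_at (x : nat -> M) (u : nat -> nat -> M) i :
  (fun m => scons x u m i) = scons (x i) (fun m => u m i).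
Proof. by apply: functional_extensionality => -[|m]. Qed.

Hypothesis e_onto : forall p, exists k, e k = p.

Lemma ext_value_sat_eventually (th : formula S) :
  eventually (fun i => sat (fun m => scons a d m i) th <->
                       sat (fun m => scons ext_value (fun m => phi (d m)) m i) th).
Proof.
have [k <-] := e_onto th; have [N HN] := realizable_eventually k.
exists (maxn N k) => i; rewrite geq_max => /andP [le_N le_k]; rewrite !scons_at.
by symmetry; apply: ext_value_realizes le_k (HN i le_N) k (leqnn k).
Qed.

Hypothesis d_onto : forall f, Dom f -> exists m, d m = f.
Hypothesis a_notin : ~ Dom a.

Lemma ext_dom_index f : ext_dom Dom a f -> exists k,
  scons a d k = f /\ scons ext_value (fun m => phi (d m)) k = ext_map phi a ext_value f.
Proof.
rewrite /ext_map; case=> [Df|->]; last first.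
  by exists 0; case: excluded_middle_informative.
have [m dm] := d_onto Df; exists m.+1; rewrite /= dm.
by case: excluded_middle_informative => // fa; case: a_notin; rewrite -fa.
Qed.

Lemma ext_value_preserves :
  almost_preserves_definable (ext_dom Dom a) (ext_map phi a ext_value).
Proof.
move=> n P [th th_def] fs fs_dom.
have [s sE] := choice _ (fun j => ext_dom_index (fs_dom j)).
pose r m := odflt 0 (omap s (insub m)).
have rE (j : 'I_n) : r j = s j by rewrite /r valK.
have [N HN] := ext_value_sat_eventually (rename_formula r th).
exists N => i le_i.
rewrite (th_def _ (fun m => scons a d (r m) i)); last first.
  by move=> j; rewrite rE; case: (sE j) => ->.
rewrite (th_def _ (fun m => scons ext_value (fun m => phi (d m)) (r m) i)); last first.
  by move=> j; rewrite rE; case: (sE j) => _ ->.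
rewrite -(sat_rename th r (fun m => scons a d m i)).
by rewrite -(sat_rename th r (fun m => scons ext_value (fun m => phi (d m)) m i)); apply: HN.
Qed.

End Extension.

Theorem lemma1 (S : signature) (M : structure S)
  (Dom : (nat -> M) -> Prop) (phi : (nat -> M) -> (nat -> M)) :
  countable_structure M ->
  countable_type {f : nat -> M | Dom f} ->
  almost_preserves_definable Dom phi ->
  forall a : nat -> M, ~ Dom a ->
  exists b : nat -> M,
    almost_preserves_definable (ext_dom Dom a) (ext_map phi a b).
Proof.
move=> [[gf gf_inj] [[gr gr_inj] _]] Dom_countable phi_pres a a_notin.
have [[f0 Df0]|Dom_empty] := classic (exists f, Dom f); last first.
  exists a => n P _ fs fs_dom; exists 0 => i _.
  have fs_a j : fs j = a by case: (fs_dom j) => // Df; case: Dom_empty; exists (fs j).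
  suff -> : (fun j => ext_map phi a a (fs j) i) = (fun j => fs j i) by [].
  apply: functional_extensionality => j.
  by rewrite fs_a /ext_map; case: excluded_middle_informative.
have [d d_onto] := countable_enum Dom_countable (exist _ f0 Df0).
have [e e_onto] := countable_enum (countable_formula gf_inj gr_inj) (FEq (Var S 0) (Var S 0)).
exists (ext_value phi e (fun m => proj1_sig (d m)) a).
apply: ext_value_preserves => //; first by move=> m; apply: proj2_sig.
by move=> f Df; have [m dm] := d_onto (exist _ f Df); exists m; rewrite dm.
Qed.
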